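(* Let $G=(V,E)$ be a hypergraph and let $(U,\overline U)$ be a minimal balanced minimum $k$-partition split in $G$ for some integer $k\ge2$. Then for every vertex $u_0\in U$ there exists a subset $S\subseteq U\setminus\{u_0\}$ with $|S|\le 2k-3$ such that $(U,\overline U)$ is the unique minimum $(S\cup\{u_0\},\overline U)$-terminal cut in $G$.
   Context: A hypergraph $G=(V,E)$ has finite vertex set $V$ and finite multiset $E$ of unit-cost hyperedges (subsets of $V$). For $X\subseteq V$, $\overline X=V\setminus X$ and $d(X)$ is the number of hyperedges meeting both $X$ and $\overline X$. The cost of an (ordered) partition of $V$ into non-empty parts is the number of hyperedges meeting at least two parts; a minimum $k$-partition is a $k$-partition of minimum cost. A 2-partition $(U,\overline U)$ is a balanced minimum $k$-partition split if there is a minimum $k$-partition $(V_1,\dots,V_k)$ with $U=\bigcup_{i=1}^{\lfloor k/2\rfloor}V_i$; it is minimal if there is no balanced minimum $k$-partition split $(U',\overline{U'})$ with $U'\subsetneq U$. For disjoint $S,T\subseteq V$, a 2-partition $(X,\overline X)$ is an $(S,T)$-terminal cut if $S\subseteq X\subseteq V\setminus T$, and it is minimum if $d(X)$ is minimum among such cuts. *)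

From mathcomp Require Import all_boot.
Set Implicit Arguments. Unset Strict Implicit. Unset Printing Implicit Defensive.

(* A hypergraph on a finite vertex type V: hyperedges given as a multiset
   (a sequence) E : seq {set V}, each of unit cost. *)
Section Hyper.
Variable V : finType.
Variable E : seq {set V}.

Definition meets (e X : {set V}) : bool := e :&: X != set0.

Definition dcut (X : {set V}) : nat :=
  count (fun e => meets e X && meets e (~: X)) E.

Definition is_kpart (k : nat) (P : 'I_k -> {set V}) : Prop :=
  (forall i, P i != set0) /\
  (forall i j, i != j -> [disjoint P i & P j]) /\
  (forall v : V, exists i, v \in P i).

Definition part_cost (k : nat) (P : 'I_k -> {set V}) : nat :=
  count (fun e => 2 <= #|[set i | meets e (P i)]|) E.

Definition min_kpart (k : nat) (P : 'I_k -> {set V}) : Prop :=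
  is_kpart P /\ forall Q : 'I_k -> {set V}, is_kpart Q -> part_cost P <= part_cost Q.

Definition balanced_split (k : nat) (U : {set V}) : Prop :=
  exists P : 'I_k -> {set V},
    min_kpart P /\ U = \bigcup_(i : 'I_k | i < k./2) P i.

Definition minimal_balanced_split (k : nat) (U : {set V}) : Prop :=
  balanced_split k U /\ ~ (exists U' : {set V}, U' \proper U /\ balanced_split k U').

Definition terminal_cut (S T X : {set V}) : Prop :=
  X != set0 /\ ~: X != set0 /\ S \subset X /\ X \subset ~: T.

Definition unique_min_terminal_cut (S T X : {set V}) : Prop :=
  terminal_cut S T X /\
  forall Y : {set V}, terminal_cut S T Y -> Y != X -> dcut X < dcut Y.
End Hyper.

From mathcomp Require Import all_boot zify.
Set Implicit Arguments. Unset Strict Implicit. Unset Printing Implicit Defensive.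

(* Take S, a smallest subset of U - u0 such that U is the unique minimum (u0 + S, ~U)-terminal
   cut (U - u0 qualifies), and suppose |S| >= 2k - 2.  Every s in S is critical: dropping it
   admits a terminal cut Y_s <> U with d(Y_s) <= d(U), and W_s = U - Y_s meets S only in s.
   For 2(k-1) such s, uncross the W_s by levels: the points of U lying in at least j of them
   form a set whose complement in U is again a terminal cut for j >= 2, hence no cheaper than
   U.  Counting per hyperedge, this leaves at most 2 d(U) crossings of the private parts of the
   W_s, each hyperedge counted at most twice.  So for one half of the family the k-1 private
   parts, completed by the rest of V, form a k-partition of cost at most d(U), i.e. a minimum
   one, whose balanced split avoids u0 and is thus a proper subset of U: a contradiction. *)

Section Crossing.
Variable V : finType.
Implicit Types e X Y : {set V}.

Definition crosses e X := meets e X && meets e (~: X).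

Lemma meetsP e X : reflect (exists2 x, x \in e & x \in X) (meets e X).
Proof.
rewrite /meets; apply: (iffP (set0Pn _)) => [[x]|[x ex Xx]].
  by rewrite inE => /andP[ex Xx]; exists x.
by exists x; rewrite inE ex Xx.
Qed.

Lemma meetsS e X Y : X \subset Y -> meets e X -> meets e Y.
Proof. by move=> /subsetP sXY /meetsP[x ex /sXY Yx]; apply/meetsP; exists x. Qed.

Lemma dcutE (E : seq {set V}) X : dcut E X = \sum_(e <- E) crosses e X.
Proof. by rewrite /dcut -sum1_count big_mkcond. Qed.

End Crossing.

Lemma sum_bool_card (T : finType) (P : pred T) : \sum_(i : T) P i = #|[set i | P i]|.
Proof. by rewrite -sum1dep_card [RHS]big_mkcond; apply: eq_bigr => i _; case: (P i). Qed.

Lemma sum_gt_from3 a b : \sum_(3 <= j < b.+1) (a < j) = b - maxn a 2.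
Proof.
elim: b => [|b IHb]; first by rewrite big_geq.
have [b_lt2|b_ge2] := ltnP b 2; first by rewrite big_geq //; lia.
by rewrite big_nat_recr //= IHb; lia.
Qed.

Section Levels.
Variables (V I : finType) (U : {set V}) (W : I -> {set V}).
Hypothesis sub_WU : forall i, W i \subset U.
Hypothesis card_I_gt1 : 1 < #|I|.
Implicit Types (e : {set V}) (x : V) (i : I).

Definition cov x := #|[set i | x \in W i]|.
Definition level j := [set x in U | j <= cov x].
Definition priv i := W i :\: \bigcup_(i' | i' != i) W i'.
Definition owners e := [set i | e :&: U \subset W i].

Definition ncross_priv e := #|[set i | crosses e (priv i)]|.
(* Levels 1 and 2 are left out: in edge_uncrossing their place is taken by the private parts
   crossed, capped at two. *)
Definition ncross_level e := \sum_(3 <= j < #|I|.+1) crosses e (U :\: level j).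
Definition ncross_rest e := #|[set i | crosses e (U :\: W i)]|.

Lemma priv_sub i : priv i \subset W i.
Proof. exact: subsetDl. Qed.

Lemma mem_priv_W i i' x : x \in priv i -> x \in W i' -> i' = i.
Proof.
rewrite inE => /andP[x_other _] xW; apply/eqP; apply: contraNT x_other => i'_ne.
by apply/bigcupP; exists i'.
Qed.

Lemma crosses_priv_owner e i i' : i' \in owners e -> crosses e (priv i) -> i = i'.
Proof.
rewrite inE => /subsetP eU_W /andP[/meetsP[y ey yP] _].
have yU : y \in U := subsetP (sub_WU i) y (subsetP (priv_sub i) y yP).
by rewrite (mem_priv_W yP (eU_W y _)) // inE ey yU.
Qed.

Lemma minn_ncross_priv_owners e : minn 2 (ncross_priv e) <= 2 - #|owners e|.
Proof.
have privs_sub j : j \in owners e -> [set i | crosses e (priv i)] \subset [set j].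
  by move=> oj; apply/subsetP => i; rewrite !inE => /(crosses_priv_owner oj)->.
have [/card_gt1P[j1 [j2 [o1 o2 /negPf j12]]]|own_le1] := ltnP 1 #|owners e|.
  suff -> : ncross_priv e = 0 by rewrite minn0.
  apply: eq_card0 => i; rewrite inE; apply/negP => cross_i.
  by move: j12; rewrite -(crosses_priv_owner o1 cross_i) -(crosses_priv_owner o2 cross_i) eqxx.
have [->|/card_gt0P[j oj]] := posnP #|owners e|; first exact: geq_minl.
have := subset_leq_card (privs_sub j oj); rewrite cards1 /ncross_priv; lia.
Qed.

Lemma owners_le_cov e y : y \in e -> y \in U -> #|owners e| <= cov y.
Proof.
move=> ey yU; apply/subset_leq_card/subsetP => i; rewrite !inE => /subsetP; apply.
by rewrite inE ey yU.
Qed.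

Lemma crosses_level_owners e j : crosses e (U :\: level j) -> #|owners e| < j.
Proof.
case/andP=> /meetsP[y ey]; rewrite !inE => /andP[y_low yU] _.
by rewrite yU -ltnNge in y_low; exact: leq_ltn_trans (owners_le_cov ey yU) y_low.
Qed.

Lemma ncross_level_le e b : b <= #|I| ->
    (forall j, j <= #|I| -> crosses e (U :\: level j) -> j <= b) ->
  ncross_level e <= b - maxn #|owners e| 2.
Proof.
move=> b_le cross_le; rewrite /ncross_level -sum_gt_from3.
rewrite (big_nat_widen _ _ _ _ _ (b_le : b.+1 <= #|I|.+1)) [leqRHS]big_mkcond /=.
rewrite big_nat_cond [leqRHS]big_nat_cond; apply: leq_sum => j /andP[/andP[_ j_le] _].
case cross_j: (crosses _ _) => //.
by rewrite ltnS cross_le //= crosses_level_owners.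
Qed.

Lemma edge_uncrossing_of_bound e b : 2 <= b <= #|I| ->
    (forall j, j <= #|I| -> crosses e (U :\: level j) -> j <= b) ->
    b - #|owners e| <= ncross_rest e ->
  minn 2 (ncross_priv e) + ncross_level e <= ncross_rest e.
Proof.
case/andP=> b_ge2 b_le cross_le rest_ge.
have := minn_ncross_priv_owners e; have := ncross_level_le b_le cross_le; lia.
Qed.

Lemma cov_gt1 x i i' : x \in W i -> x \in W i' -> i != i' -> 1 < cov x.
Proof. by move=> xWi xWi' neq; apply/card_gt1P; exists i, i'; rewrite !inE xWi xWi'. Qed.

Lemma mem_priv x i : cov x <= 1 -> x \in W i -> x \in priv i.
Proof.
move=> cov_le1 xW; rewrite inE xW andbT; apply/bigcupP => -[i' neq xW'].
by have := cov_gt1 xW xW'; rewrite eq_sym neq ltnNge cov_le1 => /(_ isT).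
Qed.

Lemma ncross_rest_straddle e : meets e (~: U) -> #|I| - #|owners e| <= ncross_rest e.
Proof.
move=> eUc; have := cardsC (owners e); have : ~: owners e \subset [set i | crosses e (U :\: W i)].
  apply/subsetP => i; rewrite !inE => /subsetPn[y]; rewrite inE => /andP[ey yU] yW.
  apply/andP; split; first by apply/meetsP; exists y; rewrite // inE yW.
  by apply: meetsS eUc; rewrite setCS subsetDl.
move=> /subset_leq_card; rewrite /ncross_rest; lia.
Qed.

Lemma ncross_rest_inside e x : e \subset U -> x \in e -> cov x - #|owners e| <= ncross_rest e.
Proof.
move=> eU ex; have := leq_of_leqif (leq_card_setU [set i | crosses e (U :\: W i)] (owners e)).
suff : cov x <= #|[set i | crosses e (U :\: W i)] :|: owners e| by rewrite /ncross_rest; lia.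
apply/subset_leq_card/subsetP => i; rewrite !inE => xW.
have [_|/subsetPn[z]] := boolP (e :&: U \subset W i); first by rewrite orbT.
rewrite orbF inE => /andP[ez zU] zW.
apply/andP; split; apply/meetsP; first by exists z; rewrite // inE zW.
by exists x; rewrite // !inE xW.
Qed.

Lemma ncross_priv_inside e :
  e \subset U -> {in e, forall z, cov z <= 1} -> ncross_priv e <= ncross_rest e.
Proof.
move=> eU cov_le1; apply/subset_leq_card/subsetP => i; rewrite !inE.
case/andP=> /meetsP[y ey yP] /meetsP[z ez]; rewrite inE => zP.
have zW : z \notin W i by apply: contra zP; apply: mem_priv; apply: cov_le1.
apply/andP; split; apply/meetsP; first by exists z; rewrite // inE zW (subsetP eU).
by exists y; rewrite // !inE (subsetP (priv_sub i)).
Qed.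

Lemma edge_uncrossing_inside e : e \subset U ->
  minn 2 (ncross_priv e) + ncross_level e <= ncross_rest e.
Proof.
move=> eU; have [->|[x0 ex0]] := set_0Vmem e.
  have no_cross X : crosses set0 X = false by rewrite /crosses /meets set0I eqxx.
  rewrite /ncross_level big1 => [|j _]; last by rewrite no_cross.
  by rewrite addn0 (_ : ncross_priv set0 = 0) //; apply: eq_card0 => i; rewrite inE no_cross.
have [x ex x_max] := @arg_maxnP V x0 (mem e) cov ex0.
have level_le j : crosses e (U :\: level j) -> j <= cov x.
  case/andP=> _ /meetsP[z ez]; rewrite !inE (subsetP eU z ez) andbT negbK.
  by move=> /leq_trans; apply; apply: x_max.
have [cov_le1|cov_gt1x] := leqP (cov x) 1.
  rewrite /ncross_level big_nat_cond big1 => [|j /andP[/andP[j_ge3 _] _]].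
    rewrite addn0; apply: leq_trans (geq_minr _ _) (ncross_priv_inside eU _) => z ez.
    exact: leq_trans (x_max z ez) cov_le1.
  by case: (boolP (crosses e (U :\: level j))) => // /level_le; lia.
apply: (edge_uncrossing_of_bound (b := cov x)); first by rewrite cov_gt1x /cov max_card.
  by move=> j _ /level_le.
exact: ncross_rest_inside.
Qed.

Lemma edge_uncrossing e : minn 2 (ncross_priv e) + ncross_level e <= ncross_rest e.
Proof.
have [eUc|eU_in] := boolP (meets e (~: U)).
  apply: (edge_uncrossing_of_bound (b := #|I|)) => //; first by rewrite card_I_gt1 leqnn.
  exact: ncross_rest_straddle.
apply: edge_uncrossing_inside; apply/subsetP => y ey.
by apply: (contraNT _ eU_in) => yU; apply/meetsP; exists y; rewrite ?inE.
Qed.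

Lemma sum_minn_ncross_priv_le (E : seq {set V}) :
    (forall i, dcut E (U :\: W i) <= dcut E U) ->
    (forall j, 3 <= j -> dcut E U <= dcut E (U :\: level j)) ->
  \sum_(e <- E) minn 2 (ncross_priv e) <= 2 * dcut E U.
Proof.
move=> rest_le level_ge.
have per_edge :
    \sum_(e <- E) (minn 2 (ncross_priv e) + ncross_level e) <= \sum_(e <- E) ncross_rest e.
  by apply: leq_sum => e _; apply: edge_uncrossing.
have rest_sum : \sum_(e <- E) ncross_rest e <= #|I| * dcut E U.
  under eq_bigr do rewrite /ncross_rest -sum_bool_card.
  rewrite exchange_big -sum_nat_const; apply: leq_sum => i _; rewrite -dcutE; exact: rest_le.
have level_sum : (#|I| - 2) * dcut E U <= \sum_(e <- E) ncross_level e.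
  rewrite /ncross_level exchange_big /= -[#|I| - 2]/(#|I|.+1 - 3) -sum_nat_const_nat.
  rewrite big_nat_cond [leqRHS]big_nat_cond; apply: leq_sum => j /andP[/andP[j_ge3 _] _].
  by rewrite -dcutE; apply: level_ge.
rewrite big_split /= in per_edge; rewrite mulnBl in level_sum.
have : 2 * dcut E U <= #|I| * dcut E U by rewrite leq_mul2r card_I_gt1 orbT.
lia.
Qed.

End Levels.

Lemma exists_pair_le (J : finType) (P : pred (J * bool)) :
  [exists j, P (j, false)] + [exists j, P (j, true)] <= minn 2 #|[set i | P i]|.
Proof.
case: existsP => [[j1 P1]|_]; case: existsP => [[j2 P2]|_] //=;
  rewrite ?addn1 ?addn0 leq_min; apply/andP; split => //.
- by apply/card_gt1P; exists (j1, false), (j2, true); rewrite !inE xpair_eqE andbF.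
- by apply/card_gt0P; exists (j1, false); rewrite inE.
- by apply/card_gt0P; exists (j2, true); rewrite inE.
Qed.

Lemma cheap_private_half (V J : finType) (W : J * bool -> {set V}) (E : seq {set V}) d :
    \sum_(e <- E) minn 2 (ncross_priv W e) <= 2 * d ->
  exists b, count (fun e => [exists j, crosses e (priv W (j, b))]) E <= d.
Proof.
move=> sum_le; pose half b e := [exists j, crosses e (priv W (j, b))].
suff [b cheap] : exists b, count (half b) E <= d by exists b.
have count_half b : count (half b) E = \sum_(e <- E) half b e.
  by rewrite -sum1_count big_mkcond.
have : count (half false) E + count (half true) E <= 2 * d.
  rewrite !count_half -big_split; apply: leq_trans sum_le; apply: leq_sum => e _.
  exact: (exists_pair_le (fun i => crosses e (priv W i))).
by case: (leqP (count (half false) E) d) => ?; [exists false | exists true]; lia.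
Qed.

Lemma exists_inj_into (T V : finType) (A : {set V}) :
  #|T| <= #|A| -> exists2 f : T -> V, injective f & forall t, f t \in A.
Proof.
move=> le_TA; exists (fun t => enum_val (widen_ord le_TA (enum_rank t))) => [t t'|t].
  by move/enum_val_inj/(congr1 val) => /= /val_inj /enum_rank_inj.
exact: enum_valP.
Qed.

Section Partitions.
Variables (V : finType) (E : seq {set V}).

Lemma dcut_balanced_le_cost k (P : 'I_k -> {set V}) :
  is_kpart P -> dcut E (\bigcup_(i : 'I_k | i < k./2) P i) <= part_cost E P.
Proof.
case=> _ [_ P_cover]; apply: sub_count => e /andP[/meetsP[x ex /bigcupP[i i_half Pix]]].
case/meetsP=> y ey; rewrite inE => y_out; have [i' Pi'y] := P_cover y.
apply/card_gt1P; exists i, i'; rewrite !inE; split.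
- by apply/meetsP; exists x.
- by apply/meetsP; exists y.
- by apply: contraNneq y_out => ii'; apply/bigcupP; exists i; rewrite // ii'.
Qed.

Lemma balanced_split_cheaper k U (Q : 'I_k -> {set V}) :
    balanced_split E k U -> is_kpart Q -> part_cost E Q <= dcut E U ->
  balanced_split E k (\bigcup_(i : 'I_k | i < k./2) Q i).
Proof.
move=> [P [[kpP P_min] ->]] kpQ Q_cheap; exists Q; split=> //; split=> // Q' kpQ'.
exact: leq_trans Q_cheap (leq_trans (dcut_balanced_le_cost kpP) (P_min Q' kpQ')).
Qed.

Lemma balanced_split_compl_neq0 k U : 0 < k -> balanced_split E k U -> ~: U != set0.
Proof.
case: k => // m _ [P [[[P_neq0 [P_disj _]] _] ->]].
case/set0Pn: (P_neq0 ord_max) => x Px; apply/set0Pn; exists x; rewrite inE.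
apply/bigcupP => -[i i_half Pix].
have i_max : i != ord_max by apply: contraTneq i_half => ->; rewrite /= -leqNgt; lia.
by rewrite (disjointFr (P_disj _ _ i_max) Pix) in Px.
Qed.

Variables (m : nat) (R : 'I_m -> {set V}) (x0 : V).
Hypothesis R_neq0 : forall j, R j != set0.
Hypothesis R_disj : forall j j' x, x \in R j -> x \in R j' -> j = j'.
Hypothesis x0_notin_R : forall j, x0 \notin R j.

Definition complete_part (i : 'I_m.+1) : {set V} :=
  if unlift ord_max i is Some j then R j else ~: \bigcup_j R j.

Lemma complete_part_lift j : complete_part (lift ord_max j) = R j.
Proof. by rewrite /complete_part liftK. Qed.

Lemma complete_part_disj i i' x : x \in complete_part i -> x \in complete_part i' -> i = i'.
Proof.
rewrite /complete_part; case: unliftP => [j ->|->]; case: unliftP => [j' ->|->] //.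
- by move=> xj xj'; rewrite (R_disj xj xj').
- by move=> xj; rewrite inE => /bigcupP[]; exists j.
- by rewrite inE => /bigcupP x_out xj'; case: x_out; exists j'.
Qed.

Lemma complete_part_kpart : is_kpart complete_part.
Proof.
split; [|split].
- move=> i; rewrite /complete_part; case: unliftP => [j _|_]; first exact: R_neq0.
  by apply/set0Pn; exists x0; rewrite inE; apply/bigcupP => -[j _]; apply/negP.
- move=> i i' neq; rewrite -setI_eq0; apply/eqP/setP => x; rewrite !inE.
  by apply/negP => /andP[xi xi']; rewrite (complete_part_disj xi xi') eqxx in neq.
- move=> x; have [/bigcupP[j _ xj]|x_out] := boolP (x \in \bigcup_j R j).
    by exists (lift ord_max j); rewrite complete_part_lift.
  by exists ord_max; rewrite /complete_part unlift_none inE.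
Qed.

Lemma part_cost_complete :
  part_cost E complete_part <= count (fun e => [exists j, crosses e (R j)]) E.
Proof.
apply: sub_count => e /card_gt1P[i1 [i2 []]]; rewrite !inE.
have meets_compl i i' : i != i' -> meets e (complete_part i') -> meets e (~: complete_part i).
  move=> neq /meetsP[y ey yi']; apply/meetsP; exists y; rewrite // inE.
  by apply: contra neq => yi; rewrite (complete_part_disj yi yi').
wlog [j ->] : i1 i2 / exists j, i1 = lift ord_max j => [wlog|m1 m2 neq].
  case: (unliftP ord_max i1) => [j ->|->]; first by apply: wlog; exists j.
  case: (unliftP ord_max i2) => [j ->|->]; last by rewrite eqxx.
  move=> m1 m2 neq; apply: (wlog (lift ord_max j) ord_max) => //; first by exists j.
  by rewrite eq_sym.
apply/existsP; exists j; rewrite /crosses -complete_part_lift m1 /=.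
exact: meets_compl neq m2.
Qed.

Lemma balanced_complete_part_sub :
  \bigcup_(i : 'I_m.+1 | i < m.+1./2) complete_part i \subset \bigcup_j R j.
Proof.
apply/bigcupsP => i i_half; rewrite /complete_part.
case: unliftP => [j _|i_max]; first exact: bigcup_sup.
by move: i_half; rewrite i_max /= ltnNge; lia.
Qed.

End Partitions.

Definition terminal_cutb (V : finType) (S T X : {set V}) : bool :=
  [&& X != set0, ~: X != set0, S \subset X & X \subset ~: T].

Lemma terminal_cutP (V : finType) (S T X : {set V}) :
  reflect (terminal_cut S T X) (terminal_cutb S T X).
Proof.
by apply: (iffP and4P) => [[? ? ? ?]|[? [? [? ?]]]]; do !split.
Qed.

Section Isolation.
Variables (V : finType) (E : seq {set V}) (U : {set V}) (u0 : V).
Hypotheses (u0U : u0 \in U) (UC_neq0 : ~: U != set0).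
Implicit Types S Y : {set V}.

Definition isolating S :=
  [forall Y, terminal_cutb (u0 |: S) (~: U) Y ==> (Y != U) ==> (dcut E U < dcut E Y)].

Lemma terminal_cutb_between S Y :
  u0 |: S \subset Y -> Y \subset U -> terminal_cutb (u0 |: S) (~: U) Y.
Proof.
move=> SY YU; rewrite /terminal_cutb SY setCK YU !andbT; apply/andP; split.
  by apply/set0Pn; exists u0; apply: (subsetP SY); rewrite setU11.
by apply: contraNneq UC_neq0 => YC0; rewrite -subset0 -YC0 setCS.
Qed.

Lemma isolating_unique S :
  S \subset U -> isolating S -> unique_min_terminal_cut E (u0 |: S) (~: U) U.
Proof.
move=> SU /forallP iso; split.
  by apply/terminal_cutP/terminal_cutb_between; rewrite // subUset sub1set u0U.
by move=> Y /terminal_cutP cutY YU; move/implyP/(_ cutY)/implyP/(_ YU): (iso Y).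
Qed.

Lemma isolating_all : isolating (U :\ u0).
Proof.
apply/forallP => Y; apply/implyP => /and4P[_ _ UY YU].
rewrite setCK in YU; rewrite setD1K // in UY.
by rewrite (_ : Y = U) ?eqxx //; apply/eqP; rewrite eqEsubset YU.
Qed.

Lemma isolating_dcut_lt S Y : isolating S ->
  u0 |: S \subset Y -> Y \subset U -> Y != U -> dcut E U < dcut E Y.
Proof.
by move=> /forallP/(_ Y) iso SY YU; move: iso; rewrite terminal_cutb_between //= => /implyP.
Qed.

Lemma isolating_dcut_le S Y : isolating S ->
  u0 |: S \subset Y -> Y \subset U -> dcut E U <= dcut E Y.
Proof.
move=> iso SY YU; have [->//|Y_ne] := eqVneq Y U.
exact/ltnW/(isolating_dcut_lt iso).
Qed.

Lemma removal_witness S s : S \subset U -> isolating S -> s \in S -> ~~ isolating (S :\ s) ->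
  exists W : {set V}, [/\ W \subset U, u0 \notin W, s \in W,
    {in S, forall s', s' \in W -> s' = s} & dcut E (U :\: W) <= dcut E U].
Proof.
move=> SU iso sS /forallPn[Y]; rewrite !negb_imply -leqNgt.
case/and3P=> /and4P[_ _ SY]; rewrite setCK => YU Y_ne le_Y.
have u0Y : u0 \in Y by apply: (subsetP SY); rewrite setU11.
have sY : s \notin Y.
  apply: contraL le_Y => sY; rewrite -ltnNge (isolating_dcut_lt iso) //.
  by rewrite -(setD1K sS) setUCA subUset sub1set sY.
exists (U :\: Y); split.
- exact: subsetDl.
- by rewrite inE u0Y.
- by rewrite inE sY (subsetP SU).
- move=> s' s'S; rewrite inE => /andP[s'Y _]; apply/eqP; apply: contraNT s'Y => s'_ne.
  by apply: (subsetP SY); rewrite !inE s'_ne s'S orbT.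
- by rewrite setDDr setDv set0U (setIidPr YU).
Qed.

Lemma isolating_witness_family S (I : finType) : S \subset U -> isolating S ->
    {in S, forall s, ~~ isolating (S :\ s)} -> #|I| <= #|S| ->
  exists W : I -> {set V}, [/\ forall i, W i \subset U, forall i, u0 \notin W i,
    forall i, exists2 x, x \in W i & cov W x <= 1,
    {in S, forall s, cov W s <= 1} & forall i, dcut E (U :\: W i) <= dcut E U].
Proof.
move=> SU iso S_crit /exists_inj_into[f f_inj fS].
have [W W_spec] := fin_all_exists (fun i => removal_witness SU iso (fS i) (S_crit _ (fS i))).
have cov_S s : s \in S -> cov W s <= 1.
  move=> sS; rewrite leqNgt; apply/card_gt1P => -[i1 [i2 []]]; rewrite !inE => W1 W2.
  case: (W_spec i1) (W_spec i2) => _ _ _ /(_ s sS W1) s1 _ [_ _ _ /(_ s sS W2) s2 _].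
  by rewrite (f_inj i1 i2) ?eqxx // -s1 -s2.
exists W; split=> // [i|i|i|i]; try by case: (W_spec i).
by exists (f i); [case: (W_spec i) | apply: cov_S].
Qed.

Lemma isolating_levels S (I : finType) (W : I -> {set V}) j : isolating S ->
    S \subset U -> (forall i, u0 \notin W i) -> {in S, forall s, cov W s <= 1} -> 2 <= j ->
  dcut E U <= dcut E (U :\: level U W j).
Proof.
move=> iso SU u0_W cov_S j_ge2; apply: isolating_dcut_le iso _ (subsetDl _ _).
have cov_u0 : cov W u0 = 0 by apply: eq_card0 => i; rewrite inE (negbTE (u0_W i)).
rewrite subUset sub1set !inE u0U cov_u0 -ltnNge (leq_trans _ j_ge2) //=.
apply/subsetP => s sS; rewrite !inE (subsetP SU) // andbT -ltnNge.
exact: leq_ltn_trans (cov_S s sS) j_ge2.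
Qed.

Lemma isolating_cheap_private_parts S m : 0 < m -> S \subset U -> isolating S ->
    {in S, forall s, ~~ isolating (S :\ s)} -> 2 * m <= #|S| ->
  exists R : 'I_m -> {set V}, [/\ forall j, R j != set0,
    forall j j' x, x \in R j -> x \in R j' -> j = j',
    forall j, R j \subset U :\ u0 &
    count (fun e => [exists j, crosses e (R j)]) E <= dcut E U].
Proof.
move=> m_gt0 SU iso S_crit S_big.
have card_I : #|{: 'I_m * bool}| = 2 * m by rewrite card_prod card_ord card_bool mulnC.
have [W [W_U u0_W W_low cov_S rest_le]] :=
  isolating_witness_family SU iso S_crit (leq_trans (eq_leq card_I) S_big).
have level_ge j : 3 <= j -> dcut E U <= dcut E (U :\: level U W j).
  by move=> j_ge3; apply: isolating_levels iso SU u0_W cov_S (ltnW j_ge3).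
have card_I_gt1 : 1 < #|{: 'I_m * bool}| by rewrite card_I; lia.
have [b cheap] :=
  cheap_private_half (sum_minn_ncross_priv_le W_U card_I_gt1 rest_le level_ge).
exists (fun j => priv W (j, b)); split=> // [j|j j' x xj xj'|j].
- by have [x xW x_low] := W_low (j, b); apply/set0Pn; exists x; apply: mem_priv.
- by case: (mem_priv_W xj (subsetP (priv_sub W _) x xj')).
- apply/subsetP => x xj; have xW := subsetP (priv_sub W _) x xj.
  by rewrite !inE (subsetP (W_U _) x xW) andbT; apply: contraNneq (u0_W (j, b)) => <-.
Qed.

End Isolation.

Theorem theorem5p2 (V : finType) (E : seq {set V}) (k : nat) (U : {set V}) :
  2 <= k ->
  minimal_balanced_split E k U ->
  forall u0 : V, u0 \in U ->
  exists S : {set V},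
    [/\ S \subset U :\ u0, #|S| <= 2 * k - 3 &
        unique_min_terminal_cut E (u0 |: S) (~: U) U].
Proof.
case: k => [|m] // k_gt1 [splitU minU] u0 u0U.
have UC_neq0 := balanced_split_compl_neq0 (ltn0Sn m) splitU.
pose good (S : {set V}) := (S \subset U :\ u0) && isolating E U u0 S.
have good_all : good (U :\ u0) by rewrite /good subxx isolating_all.
have [S /andP[S_sub isoS] S_min] := arg_minnP (fun S : {set V} => #|S|) good_all.
have SU : S \subset U := subset_trans S_sub (subD1set U u0).
exists S; split=> //; last exact: isolating_unique.
rewrite leqNgt; apply/negP => S_big.
have S_crit : {in S, forall s, ~~ isolating E U u0 (S :\ s)}.
  move=> s sS; apply/negP => iso_s.
  have := S_min (S :\ s); rewrite /good iso_s (subset_trans (subD1set S s) S_sub).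
  by rewrite (cardsD1 s S) sS => /(_ isT); lia.
have two_m_le : 2 * m <= #|S| by lia.
have [R [R_neq0 R_disj R_sub R_cheap]] :=
  isolating_cheap_private_parts u0U UC_neq0 k_gt1 SU isoS S_crit two_m_le.
apply: minU; exists (\bigcup_(i : 'I_m.+1 | i < m.+1./2) complete_part R i); split.
- apply: sub_proper_trans (properD1 u0U); apply: subset_trans (balanced_complete_part_sub R) _.
  by apply/bigcupsP => j _; apply: R_sub.
- apply: balanced_split_cheaper splitU _ (leq_trans (part_cost_complete E R_disj) R_cheap).
  apply: (complete_part_kpart (x0 := u0) R_neq0 R_disj) => j.
  by apply/negP => /(subsetP (R_sub j))/setD1P[]; rewrite eqxx.
Qed.
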